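(* (i) For integers $p\geq 0$, $k\geq p+1$ and $n\geq 2k-p+2$, $\rho(M_{n,n-1}^{k-p,n-k-1})>\rho(M_{n,n-1}^{n-k-1,k-p})$. (ii) For integers $p\geq 0$, $k\geq p+2$ and $n\geq 2k-p+2$, $\rho(M_{n,n-1}^{n-k,k-p-1})>\rho(M_{n,n-1}^{k-p,n-k-1})$.
   Context: $\rho$ denotes the largest eigenvalue of the adjacency matrix. $M_{n,m}^{s,t}$: bipartite graph with parts $X=X_1\cup X_2$, $Y=Y_1\cup Y_2$, $|X_1|=s$, $|X_2|=n-s$, $|Y_1|=m-t$, $|Y_2|=t$; edges are all pairs between $X_1$ and $Y_1$, between $X_2$ and $Y_1$, and between $X_2$ and $Y_2$. *)

From HB Require Import structures.
From mathcomp Require Import all_boot all_order all_algebra.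
From mathcomp Require Import reals.
From mathcomp.real_closed Require Import polyrcf.
Set Implicit Arguments. Unset Strict Implicit. Unset Printing Implicit Defensive.
Import Order.TTheory GRing.Theory Num.Theory.
Local Open Scope ring_scope.

(* Vertices of M_{n,m}^{s,t} are 'I_(n+m): indices u < n form X
   (X1 = {u < s}, X2 = {s <= u < n}); indices n + y with y < m form Y
   (Y1 = {y < m - t}, Y2 = {m - t <= y < m}).
   Edges: X1-Y1, X2-Y1, X2-Y2, i.e. x ~ y iff y in Y1 or x in X2. *)
Definition Mst_edgeXY (n m s t u v : nat) : bool :=
  [&& u < n, n <= v & (v - n < m - t) || (s <= u)]%N.

Definition Mst_adj (R : nzRingType) (n m s t : nat) : 'M[R]_(n + m) :=
  \matrix_(i, j) (if Mst_edgeXY n m s t i j || Mst_edgeXY n m s t j i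
                  then 1 else 0).

Definition rho (R : rcfType) (N : nat) (A : 'M[R]_N) : R :=
  let s := rootsR (char_poly A) in \big[Num.max/head 0 s]_(x <- s) x.

From HB Require Import structures.
From mathcomp Require Import all_boot all_order all_algebra.
From mathcomp Require Import reals.
From mathcomp.real_closed Require Import polyrcf.
From mathcomp Require Import zify ring lra.
Set Implicit Arguments.
Unset Strict Implicit.
Unset Printing Implicit Defensive.

(* The classes X1, X2, Y1, Y2 of M_{n,m}^{s,t} form an equitable partition
   with class sizes a = s, b = n - s, c = m - t, d = t.  Summing an
   eigenvector over the classes shows that every nonzero eigenvalue is a root
   of x^4 - T x^2 + D, where T = ac + bc + bd is the number of edges and
   D = abcd; conversely the largest root sqrt((T + sqrt(T^2 - 4D)) / 2) has an
   eigenvector that is constant on each class, so it is rho.  This root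
   increases with T and decreases with D, and in both comparisons the graph
   claimed to have the larger rho has at least as many edges and a strictly
   smaller D. *)

Import Order.TTheory GRing.Theory Num.Theory.
Local Open Scope ring_scope.

Definition biquad {R : nzRingType} (T D x : R) : R := x ^+ 4 - T * x ^+ 2 + D.

Definition Mst_biquad {R : nzRingType} (a b c d : R) :=
  biquad (a * c + b * c + b * d) (a * b * c * d).

Lemma class_sums_biquad (R : comNzRingType) (a b c d x S1 S2 S3 S4 : R) :
    x * S1 = a * S3 -> x * S2 = b * (S3 + S4) ->
    x * S3 = c * (S1 + S2) -> x * S4 = d * S2 ->
  Mst_biquad a b c d x * S2 = 0 /\ Mst_biquad a b c d x * S3 = 0.
Proof.
move=> e1 e2 e3 e4.
(* Eliminating S1 and S4 gives (x^2 - ac) S3 = c x S2 and (x^2 - bd) S2 = b x S3. *)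
pose E1 := x * S1 - a * S3; pose E2 := x * S2 - b * (S3 + S4).
pose E3 := x * S3 - c * (S1 + S2); pose E4 := x * S4 - d * S2.
have [E1_0 E2_0 E3_0 E4_0] : [/\ E1 = 0, E2 = 0, E3 = 0 & E4 = 0].
  by rewrite /E1 /E2 /E3 /E4 e1 e2 e3 e4 !subrr.
split.
- have -> : Mst_biquad a b c d x * S2 =
      (x ^+ 2 - a * c) * (x * E2 + b * E4) + b * x * (x * E3 + c * E1).
    by rewrite /Mst_biquad /biquad /E1 /E2 /E3 /E4; ring.
  by rewrite E1_0 E2_0 E3_0 E4_0 !(mulr0, addr0).
- have -> : Mst_biquad a b c d x * S3 =
      (x ^+ 2 - b * d) * (x * E3 + c * E1) + c * x * (x * E2 + b * E4).
    by rewrite /Mst_biquad /biquad /E1 /E2 /E3 /E4; ring.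
  by rewrite E1_0 E2_0 E3_0 E4_0 !(mulr0, addr0).
Qed.

Definition biquad_root {R : rcfType} (T D : R) : R :=
  Num.sqrt ((T + Num.sqrt (T ^+ 2 - 4 * D)) / 2).

Section BiquadRoot.
Variable R : rcfType.
Implicit Types T D x : R.

Lemma biquad_factor T D x : 0 <= T ^+ 2 - 4 * D ->
  let r := (T + Num.sqrt (T ^+ 2 - 4 * D)) / 2 in
  biquad T D x = (x ^+ 2 - r) * (x ^+ 2 - (T - r)).
Proof.
move=> disc_ge0 r; have := sqr_sqrtr disc_ge0; rewrite /biquad /r => sq.
by rewrite -[x ^+ 4]/(x ^+ (2 * 2)) exprM; lra.
Qed.

Lemma biquad_root_gt0 T D : 0 < T -> 0 < biquad_root T D.
Proof.
by move=> T_gt0; rewrite sqrtr_gt0; have := sqrtr_ge0 (T ^+ 2 - 4 * D); lra.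
Qed.

Lemma biquad_rootE T D : 0 <= T -> 0 <= T ^+ 2 - 4 * D ->
  biquad T D (biquad_root T D) = 0.
Proof.
move=> T_ge0 disc_ge0; rewrite biquad_factor // sqr_sqrtr ?subrr ?mul0r //.
by rewrite divr_ge0 // addr_ge0 ?sqrtr_ge0.
Qed.

Lemma biquad_root_max T D x : 0 <= T ^+ 2 - 4 * D -> biquad T D x = 0 ->
  x <= biquad_root T D.
Proof.
move=> disc_ge0; rewrite biquad_factor //; set r := (_ / 2).
have q_ge0 := sqrtr_ge0 (T ^+ 2 - 4 * D).
move=> /eqP; rewrite mulf_eq0 !subr_eq0 => x2E.
have x2_le_r : x ^+ 2 <= r by case/orP: x2E => /eqP ->; rewrite /r; lra.
apply: le_trans (ler_norm x) _; rewrite -sqrtr_sqr.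
by rewrite ler_wsqrtr.
Qed.

Lemma biquad_root_lt T D T' D' : 0 <= T -> 0 <= T ^+ 2 - 4 * D ->
  T <= T' -> D' < D -> biquad_root T D < biquad_root T' D'.
Proof.
move=> T_ge0 disc_ge0 le_T lt_D.
have lt_disc : T ^+ 2 - 4 * D < T' ^+ 2 - 4 * D'.
  have : T ^+ 2 <= T' ^+ 2 by nra.
  lra.
have lt_q : Num.sqrt (T ^+ 2 - 4 * D) < Num.sqrt (T' ^+ 2 - 4 * D').
  by rewrite ltr_sqrt // (le_lt_trans disc_ge0).
have q_ge0 := sqrtr_ge0 (T ^+ 2 - 4 * D).
by rewrite ltr_sqrt; lra.
Qed.

End BiquadRoot.

Definition Mst_root {R : rcfType} (a b c d : R) :=
  biquad_root (a * c + b * c + b * d) (a * b * c * d).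

Lemma Mst_disc_ge0 (R : rcfType) (a b c d : R) :
  0 <= a -> 0 <= b -> 0 <= c -> 0 <= d ->
  0 <= (a * c + b * c + b * d) ^+ 2 - 4 * (a * b * c * d).
Proof.
move=> a_ge0 b_ge0 c_ge0 d_ge0.
have := sqr_ge0 (a * c - b * d); have := sqr_ge0 (b * c).
have : 0 <= b * c * (a * c + b * d) by rewrite !(mulr_ge0, addr_ge0).
lra.
Qed.

Lemma Mst_root_lt (R : rcfType) (a b c d a' b' c' d' : R) :
    0 <= a -> 0 <= b -> 0 <= c -> 0 <= d ->
    a * c + b * c + b * d <= a' * c' + b' * c' + b' * d' ->
    a' * b' * c' * d' < a * b * c * d ->
  Mst_root a b c d < Mst_root a' b' c' d'.
Proof.
move=> a_ge0 b_ge0 c_ge0 d_ge0; apply: biquad_root_lt; last exact: Mst_disc_ge0.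
by rewrite !(mulr_ge0, addr_ge0).
Qed.

Lemma rho_eq (R : rcfType) (N : nat) (A : 'M[R]_N) lam :
  eigenvalue A lam -> (forall x, eigenvalue A x -> x <= lam) -> rho A = lam.
Proof.
move=> eig_lam lam_max; rewrite /rho.
have rootsE x : (x \in rootsR (char_poly A)) = eigenvalue A x.
  rewrite -(roots_on_rootsR (monic_neq0 (char_poly_monic A))).
  by rewrite -eigenvalue_root_char in_itv.
have : lam \in rootsR (char_poly A) by rewrite rootsE.
case: (rootsR _) rootsE => // x0 s rootsE lam_in /=.
apply/le_anti/andP; split; last first.
  exact: (@le_bigmax_seq _ _ _ _ _ lam xpredT id lam_in).
rewrite big_seq; apply: bigmax_le => [|x x_in]; apply: lam_max.
  by rewrite -rootsE mem_head.
by rewrite -rootsE.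
Qed.

Section MstClasses.
Variables (n m s t : nat).
Hypotheses (s_lt_n : (s < n)%N) (t_lt_m : (t < m)%N).
Local Notation N := (n + m)%N.

Definition inX1 (i : nat) := (i < s)%N.
Definition inX2 (i : nat) := (s <= i < n)%N.
Definition inY1 (i : nat) := (n <= i < n + (m - t))%N.
Definition inY2 (i : nat) := (n + (m - t) <= i)%N.

Variant Mst_class_spec (i : nat) : bool -> bool -> bool -> bool -> Type :=
  | ClassX1 of inX1 i : Mst_class_spec i true false false false
  | ClassX2 of inX2 i : Mst_class_spec i false true false false
  | ClassY1 of inY1 i : Mst_class_spec i false false true false
  | ClassY2 of inY2 i : Mst_class_spec i false false false true.

Lemma Mst_classP (i : 'I_N) : Mst_class_spec i (inX1 i) (inX2 i) (inY1 i) (inY2 i).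
Proof.
case X1: (inX1 i); case X2: (inX2 i); case Y1: (inY1 i); case Y2: (inY2 i);
  first [exact: ClassX1 X1 | exact: ClassX2 X2 | exact: ClassY1 Y1
        | exact: ClassY2 Y2 | exfalso];
  by move: X1 X2 Y1 Y2 (ltn_ord i); rewrite /inX1 /inX2 /inY1 /inY2; lia.
Qed.

Section ClassSums.
Context {R : nzRingType}.
Implicit Types (v : 'rV[R]_N) (P : pred nat).
Local Notation A := (Mst_adj R n m s t).

Definition class_sum v P : R := \sum_(i < N) v 0 i * (P i)%:R.
Definition class_size P : R := \sum_(i < N) (P i)%:R.

Lemma class_sumZ v P x : class_sum (x *: v) P = x * class_sum v P.
Proof. by rewrite /class_sum mulr_sumr; apply: eq_bigr => i _; rewrite mxE mulrA. Qed.

Lemma class_sum_const v P C :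
  (forall i : 'I_N, P i -> v 0 i = C) -> class_sum v P = class_size P * C.
Proof.
move=> vC; rewrite /class_sum /class_size mulr_suml; apply: eq_bigr => i _.
by rewrite mulr_natl mulr_natr; case: (boolP (P i)) => [/vC ->|_] //; rewrite !mulr0n.
Qed.

Lemma class_size_itv P lo hi : (lo <= hi <= N)%N ->
  (forall i, (i < N)%N -> P i = (lo <= i < hi)%N) -> class_size P = (hi - lo)%:R.
Proof.
move=> /andP[lo_le_hi hi_le_N] P_itv; rewrite /class_size.
rewrite (eq_bigr (fun i : 'I_N => (lo <= i < hi)%N%:R)); last first.
  by move=> i _; rewrite P_itv.
rewrite -(big_mkord xpredT (fun i => (lo <= i < hi)%N%:R)).
rewrite (big_cat_nat (n := lo)) ?(leq_trans lo_le_hi) //=.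
rewrite (big_cat_nat (n := hi) (m := lo)) //=.
rewrite (eq_big_nat _ _ (F2 := fun=> 0)) => [|i i_lt]; last first.
  by have -> : (lo <= i < hi)%N = false by lia.
rewrite [X in _ + (X + _)](eq_big_nat _ _ (F2 := fun=> 1)) => [|i i_in]; last first.
  by have -> : (lo <= i < hi)%N = true by lia.
rewrite [X in _ + (_ + X)](eq_big_nat _ _ (F2 := fun=> 0)) => [|i i_ge]; last first.
  by have -> : (lo <= i < hi)%N = false by lia.
by rewrite !sumr_const_nat !mul0rn add0r addr0.
Qed.

Lemma class_size_X1 : class_size inX1 = s%:R.
Proof. by rewrite (@class_size_itv _ 0 s) ?subn0 //; lia. Qed.

Lemma class_size_X2 : class_size inX2 = (n - s)%:R.
Proof. by rewrite (@class_size_itv _ s n) //; lia. Qed.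

Lemma class_size_Y1 : class_size inY1 = (m - t)%:R.
Proof. by rewrite (@class_size_itv _ n (n + (m - t))) ?addKn //; lia. Qed.

Lemma class_size_Y2 : class_size inY2 = t%:R.
Proof.
rewrite (@class_size_itv _ (n + (m - t)) N); first by congr (_%:R); lia.
  by lia.
by move=> i i_lt; rewrite /inY2; lia.
Qed.

Lemma Mst_adjE (i j : 'I_N) :
  A i j = (Mst_edgeXY n m s t i j || Mst_edgeXY n m s t j i)%:R.
Proof. by rewrite mxE; case: (_ || _). Qed.

Ltac Mst_adj_lia i j :=
  move: (ltn_ord i) (ltn_ord j); rewrite /Mst_edgeXY /inX1 /inX2 /inY1 /inY2; lia.

Lemma mulmx_Mst_X1 v (j : 'I_N) : inX1 j -> (v *m A) 0 j = class_sum v inY1.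
Proof.
move=> j_X1; rewrite mxE; apply: eq_bigr => i _; rewrite Mst_adjE.
by congr (_ * _%:R); move: j_X1; Mst_adj_lia i j.
Qed.

Lemma mulmx_Mst_X2 v (j : 'I_N) : inX2 j ->
  (v *m A) 0 j = class_sum v inY1 + class_sum v inY2.
Proof.
move=> j_X2; rewrite mxE -big_split /=; apply: eq_bigr => i _.
by rewrite Mst_adjE -mulrDr -natrD; congr (_ * _%:R); move: j_X2; Mst_adj_lia i j.
Qed.

Lemma mulmx_Mst_Y1 v (j : 'I_N) : inY1 j ->
  (v *m A) 0 j = class_sum v inX1 + class_sum v inX2.
Proof.
move=> j_Y1; rewrite mxE -big_split /=; apply: eq_bigr => i _.
by rewrite Mst_adjE -mulrDr -natrD; congr (_ * _%:R); move: j_Y1; Mst_adj_lia i j.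
Qed.

Lemma mulmx_Mst_Y2 v (j : 'I_N) : inY2 j -> (v *m A) 0 j = class_sum v inX2.
Proof.
move=> j_Y2; rewrite mxE; apply: eq_bigr => i _; rewrite Mst_adjE.
by congr (_ * _%:R); move: j_Y2; Mst_adj_lia i j.
Qed.

End ClassSums.

Section Spectrum.
Variable R : rcfType.
Local Notation A := (Mst_adj R n m s t).
Local Notation a := (s%:R : R).
Local Notation b := ((n - s)%:R : R).
Local Notation c := ((m - t)%:R : R).
Local Notation d := (t%:R : R).

Lemma Mst_eigenvalue_biquad x :
  x != 0 -> eigenvalue A x -> Mst_biquad a b c d x = 0.
Proof.
move=> x_neq0 /eigenvalueP[v vA v_neq0].
have class_eq (P : pred nat) C : (forall j : 'I_N, P j -> (v *m A) 0 j = C) ->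
    x * class_sum v P = class_size P * C.
  by move=> vAC; rewrite -class_sumZ -vA; apply: class_sum_const.
have e1 := class_eq _ _ (mulmx_Mst_X1 v); have e2 := class_eq _ _ (mulmx_Mst_X2 v).
have e3 := class_eq _ _ (mulmx_Mst_Y1 v); have e4 := class_eq _ _ (mulmx_Mst_Y2 v).
rewrite class_size_X1 in e1; rewrite class_size_X2 in e2.
rewrite class_size_Y1 in e3; rewrite class_size_Y2 in e4.
have [P_S2 P_S3] := class_sums_biquad e1 e2 e3 e4.
apply/eqP; apply: contraNT v_neq0 => P_neq0.
have S2_0 : class_sum v inX2 = 0 by apply: (mulfI P_neq0); rewrite mulr0.
have S3_0 : class_sum v inY1 = 0 by apply: (mulfI P_neq0); rewrite mulr0.
have S1_0 : class_sum v inX1 = 0 by apply: (mulfI x_neq0); rewrite e1 S3_0 !mulr0.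
have S4_0 : class_sum v inY2 = 0 by apply: (mulfI x_neq0); rewrite e4 S2_0 !mulr0.
apply/eqP/rowP => j; rewrite mxE; apply: (mulfI x_neq0); rewrite mulr0.
transitivity ((v *m A) 0 j); first by rewrite vA mxE.
case: (Mst_classP j) => j_in;
  [rewrite mulmx_Mst_X1 | rewrite mulmx_Mst_X2
  | rewrite mulmx_Mst_Y1 | rewrite mulmx_Mst_Y2];
  by rewrite ?S1_0 ?S2_0 ?S3_0 ?S4_0 ?addr0.
Qed.

Lemma Mst_biquad_eigenvalue lam :
  0 < lam -> Mst_biquad a b c d lam = 0 -> eigenvalue A lam.
Proof.
move=> lam_gt0 P_lam; apply/eigenvalueP.
(* Class values solving lam w = Q w for the quotient matrix Q of the partition;
   the equation on X2 is the biquadratic itself. *)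
pose al := c * b * lam; pose be := lam * (lam ^+ 2 - a * c).
pose ga := b * lam ^+ 2; pose de := b * (lam ^+ 2 - a * c).
pose v : 'rV[R]_N :=
  \row_j (if inX1 j then al else if inX2 j then be else if inY1 j then ga else de).
have [S1 S2 S3 S4] : [/\ class_sum v inX1 = a * al, class_sum v inX2 = b * be,
    class_sum v inY1 = c * ga & class_sum v inY2 = d * de].
  rewrite -class_size_X1 -class_size_X2 -class_size_Y1 -class_size_Y2.
  by split; apply: class_sum_const => j; rewrite mxE; case: (Mst_classP j).
exists v.
  apply/rowP => j; rewrite [RHS]mxE [in RHS]mxE.
  move: P_lam; rewrite /Mst_biquad /biquad /al /be /ga /de => P_lam.
  case: (Mst_classP j) => j_in;
    [rewrite mulmx_Mst_X1 // | rewrite mulmx_Mst_X2 // | rewrite mulmx_Mst_Y1 //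
    | rewrite mulmx_Mst_Y2 //];
    by rewrite /= ?S1 ?S2 ?S3 ?S4 /al /be /ga /de; lra.
have n_lt_N : (n < N)%N by lia.
apply/negP => /eqP/rowP/(_ (Ordinal n_lt_N)); rewrite !mxE /=.
have [-> -> ->] : [/\ inX1 n = false, inX2 n = false & inY1 n].
  by rewrite /inX1 /inX2 /inY1; split; lia.
by apply/eqP; rewrite mulf_neq0 ?expf_neq0 ?gt_eqF // ltr0n subn_gt0.
Qed.

Lemma rho_Mst : rho A = Mst_root a b c d.
Proof.
have T_gt0 : 0 < a * c + b * c + b * d.
  by rewrite ltr_pwDl ?mulr_ge0 // ltr_wpDl ?mulr_ge0 // mulr_gt0 // ltr0n subn_gt0.
have disc_ge0 :=
  Mst_disc_ge0 (ler0n R s) (ler0n R (n - s)) (ler0n R (m - t)) (ler0n R t).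
apply: rho_eq => [|x x_eig].
  apply: Mst_biquad_eigenvalue; first exact: biquad_root_gt0.
  exact: biquad_rootE (ltW T_gt0) disc_ge0.
have [->|x_neq0] := eqVneq x 0; first exact: ltW (biquad_root_gt0 _ T_gt0).
exact: biquad_root_max disc_ge0 (Mst_eigenvalue_biquad x_neq0 x_eig).
Qed.

End Spectrum.
End MstClasses.

Lemma rho_Mst_sizes (R : rcfType) (n m s t a b c d : nat) :
    s = a -> t = d -> n = (a + b)%N -> m = (c + d)%N -> (0 < b)%N -> (0 < c)%N ->
  rho (Mst_adj R n m s t) = Mst_root a%:R b%:R c%:R d%:R.
Proof.
move=> -> -> -> -> b_gt0 c_gt0.
by rewrite rho_Mst ?addKn ?addnK //; lia.
Qed.

Theorem lemma5p1 (R : realType) :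
  (forall p k n : nat, (p + 1 <= k)%N -> (2 * k - p + 2 <= n)%N ->
     rho (Mst_adj R n (n - 1) (k - p) (n - k - 1))
       > rho (Mst_adj R n (n - 1) (n - k - 1) (k - p)))
  /\
  (forall p k n : nat, (p + 2 <= k)%N -> (2 * k - p + 2 <= n)%N ->
     rho (Mst_adj R n (n - 1) (n - k) (k - p - 1))
       > rho (Mst_adj R n (n - 1) (k - p) (n - k - 1))).
Proof.
split=> p k n k_ge n_ge.
- have [q ek] : exists q, k = (p + q + 1)%N by exists (k - p - 1)%N; lia.
  have [u en] : exists u, n = (k + u + 1)%N by exists (n - k - 1)%N; lia.
  rewrite (rho_Mst_sizes R (a := u) (b := p + q + 2) (c := p + u) (d := q + 1));
    try lia.
  rewrite (rho_Mst_sizes R (a := q + 1) (b := p + u + 1) (c := p + q + 1) (d := u));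
    try lia.
  have u_gt : q%:R + 1 < u%:R :> R by rewrite natr1 ltr_nat; lia.
  have q_ge0 := ler0n R q.
  apply: Mst_root_lt; try exact: ler0n; rewrite !natrD; first lra.
  have : (0 : R) < u%:R * (q%:R + 1) * (u%:R - q%:R - 1).
    by apply: mulr_gt0; [apply: mulr_gt0|]; lra.
  lra.
- have [q ek] : exists q, k = (p + q + 1)%N by exists (k - p - 1)%N; lia.
  have [u en] : exists u, n = (k + u + 1)%N by exists (n - k - 1)%N; lia.
  rewrite (rho_Mst_sizes R (a := q + 1) (b := p + u + 1) (c := p + q + 1) (d := u));
    try lia.
  rewrite (rho_Mst_sizes R (a := u + 1) (b := p + q + 1) (c := p + u + 1) (d := q));
    try lia.
  have u_gt : q%:R < u%:R :> R by rewrite ltr_nat; lia.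
  have p_ge0 := ler0n R p; have q_ge0 := ler0n R q.
  apply: Mst_root_lt; try exact: ler0n; rewrite !natrD; first lra.
  have : (0 : R) < (p%:R + q%:R + 1) * (p%:R + u%:R + 1) * (u%:R - q%:R).
    by apply: mulr_gt0; [apply: mulr_gt0|]; lra.
  lra.
Qed.
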